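(* If $\varphi \in \mathcal L_\Diamond$ is valid over the class of all dynamical systems, then ${\sf ITL}^0_\Diamond \vdash \varphi$.
   Context: $\mathcal L_\Diamond$ is the language built from a countably infinite set of propositional variables and $\bot$ using $\wedge,\vee,\to$, the modality ${\circ}$ (''next'') and the modality $\Diamond$ (''eventually''); $\neg\varphi$ abbreviates $\varphi\to\bot$. A dynamical (topological) system is a triple $(X,\mathcal T,f)$ with $(X,\mathcal T)$ a topological space and $f\colon X\to X$ continuous. A valuation $\llbracket\cdot\rrbracket$ assigns an open set to each formula with $\llbracket\bot\rrbracket=\varnothing$, $\llbracket\varphi\wedge\psi\rrbracket=\llbracket\varphi\rrbracket\cap\llbracket\psi\rrbracket$, $\llbracket\varphi\vee\psi\rrbracket=\llbracket\varphi\rrbracket\cup\llbracket\psi\rrbracket$, $\llbracket\varphi\to\psi\rrbracket=\big((X\setminus\llbracket\varphi\rrbracket)\cup\llbracket\psi\rrbracket\big)^\circ$ (interior), $\llbracket{\circ}\varphi\rrbracket=f^{-1}\llbracket\varphi\rrbracket$, $\llbracket\Diamond\varphi\rrbracket=\bigcup_{n<\omega}f^{-n}\llbracket\varphi\rrbracket$. A formula is valid over the class of dynamical systems if $\llbracket\varphi\rrbracket=X$ for every dynamical system and every valuation on it. The logic ${\sf ITL}^0_\Diamond$ is the least set of $\mathcal L_\Diamond$-formulas containing all axioms of intuitionistic propositional logic and the axioms $\neg{\circ}\bot$; ${\circ}\varphi\wedge{\circ}\psi\to{\circ}(\varphi\wedge\psi)$; ${\circ}(\varphi\vee\psi)\to{\circ}\varphi\vee{\circ}\psi$;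 ${\circ}(\varphi\to\psi)\to({\circ}\varphi\to{\circ}\psi)$; $\varphi\vee{\circ}\Diamond\varphi\to\Diamond\varphi$, and closed under modus ponens (from $\varphi$ and $\varphi\to\psi$ infer $\psi$), necessitation (from $\varphi$ infer ${\circ}\varphi$), the rule from $\varphi\to\psi$ infer $\Diamond\varphi\to\Diamond\psi$, and the induction rule from ${\circ}\varphi\to\varphi$ infer $\Diamond\varphi\to\varphi$. (Note that the Fischer Servi axiom $({\circ}\varphi\to{\circ}\psi)\to{\circ}(\varphi\to\psi)$ is not included.) *)

From HB Require Import structures.
From mathcomp Require Import all_boot.
From mathcomp Require Import classical_sets topology.

Set Implicit Arguments.
Unset Strict Implicit.
Unset Printing Implicit Defensive.

Local Open Scope classical_set_scope.

Inductive form : Type :=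
  | Var : nat -> form
  | Bot : form
  | And : form -> form -> form
  | Or  : form -> form -> form
  | Imp : form -> form -> form
  | Next : form -> form
  | Ev : form -> form.

Definition Neg (a : form) : form := Imp a Bot.

(* The intuitionistic propositional axioms are
   given by a standard complete Hilbert-style axiomatization of IPC
   (instantiated with arbitrary L_Diamond formulas), with modus ponens. *)
Inductive prf : form -> Prop :=
  | ax_K  a b : prf (Imp a (Imp b a))
  | ax_S  a b c : prf (Imp (Imp a (Imp b c)) (Imp (Imp a b) (Imp a c)))
  | ax_andE1 a b : prf (Imp (And a b) a)
  | ax_andE2 a b : prf (Imp (And a b) b)
  | ax_andI a b : prf (Imp a (Imp b (And a b)))
  | ax_orI1 a b : prf (Imp a (Or a b))
  | ax_orI2 a b : prf (Imp b (Or a b))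
  | ax_orE a b c : prf (Imp (Imp a c) (Imp (Imp b c) (Imp (Or a b) c)))
  | ax_efq a : prf (Imp Bot a)
  | ax_nextBot : prf (Neg (Next Bot))
  | ax_nextAnd a b : prf (Imp (And (Next a) (Next b)) (Next (And a b)))
  | ax_nextOr a b : prf (Imp (Next (Or a b)) (Or (Next a) (Next b)))
  | ax_nextImp a b : prf (Imp (Next (Imp a b)) (Imp (Next a) (Next b)))
  | ax_evFix a : prf (Imp (Or a (Next (Ev a))) (Ev a))
  | r_mp a b : prf a -> prf (Imp a b) -> prf b
  | r_nec a : prf a -> prf (Next a)
  | r_evMono a b : prf (Imp a b) -> prf (Imp (Ev a) (Ev b))
  | r_ind a : prf (Imp (Next a) a) -> prf (Imp (Ev a) a).

Fixpoint eval (X : topologicalType) (f : X -> X) (V : nat -> set X)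
  (a : form) : set X :=
  match a with
  | Var n => V n
  | Bot => set0
  | And a b => eval f V a `&` eval f V b
  | Or a b => eval f V a `|` eval f V b
  | Imp a b => interior ((~` eval f V a) `|` eval f V b)
  | Next a => f @^-1` eval f V a
  | Ev a => \bigcup_(n in [set: nat]) ((iter n f) @^-1` eval f V a)
  end.

Definition valid (a : form) : Prop :=
  forall (X : topologicalType) (f : X -> X), continuous f ->
  forall V : nat -> set X, (forall n, open (V n)) ->
  eval f V a = setT.

(* Prime theories of ITL^0_Diamond, obtained by a Lindenbaum construction,
   satisfy the Kripke clauses of the propositional connectives (implication
   ranging over extensions), and [fun a => T (Next a)] is again a prime
   theory.  Fix the subformulas S of phi.  Theories are compared up to a
   simulation over S of bounded depth, which is captured by finitely many
   characteristic "moment" formulas; hence "every extension reaches alpha" is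
   expressed by a formula, and the induction rule shows that a theory
   containing [Ev alpha] reaches alpha along the successor relation.  Gluing
   finite chains that fulfil all pending eventualities yields infinite honest
   paths.  With the topology whose open sets are determined by a finite prefix
   up to extension of its theories, these paths form a dynamical system under
   the shift, in which a formula of S holds at a path iff it belongs to the
   first theory of the path.  A prime theory omitting an unprovable phi thus
   starts a path refuting phi. *)

From Pilot Require Import Defs.
From HB Require Import structures.
From mathcomp Require Import all_boot.
From mathcomp Require Import boolp classical_sets topology.
From mathcomp Require Import zify.

Set Implicit Arguments.
Unset Strict Implicit.
Unset Printing Implicit Defensive.

Local Open Scope classical_set_scope.

(** * Derivations and prime theories *)

Fixpoint tree_of_form (a : form) : GenTree.tree nat :=
  match a with
  | Var n => GenTree.Leaf n
  | Bot => GenTree.Node 0 [::]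
  | And a b => GenTree.Node 1 [:: tree_of_form a; tree_of_form b]
  | Or a b => GenTree.Node 2 [:: tree_of_form a; tree_of_form b]
  | Imp a b => GenTree.Node 3 [:: tree_of_form a; tree_of_form b]
  | Next a => GenTree.Node 4 [:: tree_of_form a]
  | Ev a => GenTree.Node 5 [:: tree_of_form a]
  end.

Fixpoint form_of_tree (t : GenTree.tree nat) : option form :=
  match t with
  | GenTree.Leaf n => Some (Var n)
  | GenTree.Node 0 [::] => Some Bot
  | GenTree.Node 1 [:: t1; t2] =>
      if (form_of_tree t1, form_of_tree t2) is (Some a, Some b)
      then Some (And a b) else None
  | GenTree.Node 2 [:: t1; t2] =>
      if (form_of_tree t1, form_of_tree t2) is (Some a, Some b)
      then Some (Or a b) else None
  | GenTree.Node 3 [:: t1; t2] =>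
      if (form_of_tree t1, form_of_tree t2) is (Some a, Some b)
      then Some (Imp a b) else None
  | GenTree.Node 4 [:: t1] => omap Next (form_of_tree t1)
  | GenTree.Node 5 [:: t1] => omap Ev (form_of_tree t1)
  | _ => None
  end.

Lemma tree_of_formK : pcancel tree_of_form form_of_tree.
Proof. by elim=> //= [a -> b ->|a -> b ->|a -> b ->|a ->|a ->]. Qed.

HB.instance Definition _ := Countable.copy form (pcan_type tree_of_formK).

Definition form_of_nat (n : nat) : form := odflt Bot (unpickle n).

Lemma pickle_formK : cancel pickle form_of_nat.
Proof. by move=> a; rewrite /form_of_nat pickleK. Qed.

Inductive derives (G : set form) : form -> Prop :=
  | derives_hyp a : G a -> derives G a
  | derives_prf a : prf a -> derives G a
  | derives_mp a b : derives G a -> derives G (Imp a b) -> derives G b.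

Lemma prf_imp_refl a : prf (Imp a a).
Proof.
apply: (r_mp (ax_K a a)); apply: (r_mp (ax_K a (Imp a a))); exact: ax_S.
Qed.

Lemma derives_sub (G H : set form) a : G `<=` H -> derives G a -> derives H a.
Proof.
move=> GH; elim=> [x /GH|x|x y _ IHx _ IHxy]; [exact: derives_hyp|exact: derives_prf|].
exact: derives_mp IHx IHxy.
Qed.

Lemma derives_imp_const G a b : derives G a -> derives G (Imp b a).
Proof. by move=> Ga; apply: derives_mp Ga (derives_prf _ (ax_K _ _)). Qed.

Lemma deduction G a c : derives (G `|` [set a]) c -> derives G (Imp a c).
Proof.
elim=> [x [Gx|->]|x px|x y _ IHx _ IHxy].
- exact/derives_imp_const/derives_hyp.
- exact/derives_prf/prf_imp_refl.
- exact/derives_imp_const/derives_prf.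
- by apply: derives_mp IHx _; apply: derives_mp IHxy _; apply/derives_prf/ax_S.
Qed.

Lemma derives_bigcup (Gs : nat -> set form) c :
  {homo Gs : n m / (n <= m)%N >-> n `<=` m} ->
  derives (\bigcup_n Gs n) c -> exists n, derives (Gs n) c.
Proof.
move=> Gs_mono; elim=> [x [n _ Gnx]|x px|x y _ [n1 IH1] _ [n2 IH2]].
- by exists n; apply: derives_hyp.
- by exists 0%N; apply: derives_prf.
- exists (maxn n1 n2); apply: derives_mp.
  + by apply: derives_sub IH1; apply/Gs_mono/leq_maxl.
  + by apply: derives_sub IH2; apply/Gs_mono/leq_maxr.
Qed.

Record ptheory := PTheory {
  ptheory_set :> form -> Prop;
  ptheory_prf : forall a, prf a -> ptheory_set a;
  ptheory_mp : forall a b, ptheory_set a -> ptheory_set (Imp a b) -> ptheory_set b;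
  ptheory_prime : forall a b, ptheory_set (Or a b) -> ptheory_set a \/ ptheory_set b;
  ptheory_consistent : ~ ptheory_set Bot }.

Lemma derives_ptheory (T : ptheory) a : derives T a -> T a.
Proof.
by elim=> [//|x /ptheory_prf //|x y _ Tx _ Txy]; apply: ptheory_mp Tx Txy.
Qed.

Section Lindenbaum.
Variables (G : set form) (c : form).
Hypothesis G_c : ~ derives G c.

Fixpoint stage (n : nat) : set form :=
  if n is n'.+1 then
    let a := form_of_nat n' in
    if `[< derives (stage n' `|` [set a]) c >] then stage n'
    else stage n' `|` [set a]
  else G.

Lemma stage_mono : {homo stage : n m / (n <= m)%N >-> n `<=` m}.
Proof.
move=> n m /subnK <-; elim: (m - n)%N => [//|k IH] x /IH.
by rewrite addSn /=; case: asboolP => // _; left.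
Qed.

Lemma stage_consistent n : ~ derives (stage n) c.
Proof. by elim: n => [//|n IH] /=; case: asboolP. Qed.

Definition lindenbaum_set : set form := \bigcup_n stage n.

Lemma stage_sub n : stage n `<=` lindenbaum_set.
Proof. by move=> x; exists n. Qed.

Lemma lindenbaum_consistent : ~ derives lindenbaum_set c.
Proof. by move=> /(derives_bigcup stage_mono) [n]; apply: stage_consistent. Qed.

Lemma lindenbaum_maximal a :
  ~ lindenbaum_set a -> derives (lindenbaum_set `|` [set a]) c.
Proof.
move=> Na; apply: contrapT => Nc; apply: Na; exists (pickle a).+1 => //=.
rewrite pickle_formK; case: asboolP => [|_]; last by right.
by move=> /(derives_sub (setSU (@stage_sub (pickle a)))).
Qed.

Lemma lindenbaum_closed a : derives lindenbaum_set a -> lindenbaum_set a.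
Proof.
move=> La; apply: contrapT => /lindenbaum_maximal /deduction Lac.
exact/lindenbaum_consistent/(derives_mp La Lac).
Qed.

Lemma lindenbaum_prime a b :
  lindenbaum_set (Or a b) -> lindenbaum_set a \/ lindenbaum_set b.
Proof.
move=> Lab; apply: contrapT => /not_orP [/lindenbaum_maximal /deduction Lac].
move=> /lindenbaum_maximal /deduction Lbc; apply: lindenbaum_consistent.
apply: derives_mp (derives_hyp Lab) _; apply: derives_mp Lbc _.
by apply: derives_mp Lac _; apply/derives_prf/ax_orE.
Qed.

Definition lindenbaum : ptheory.
Proof.
refine (@PTheory lindenbaum_set _ _ lindenbaum_prime _).
- by move=> a pa; apply/lindenbaum_closed/derives_prf.
- move=> a b La Lab; apply: lindenbaum_closed.
  exact: derives_mp (derives_hyp La) (derives_hyp Lab).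
- move=> LBot; apply: lindenbaum_consistent.
  by apply: derives_mp (derives_hyp LBot) _; apply/derives_prf/ax_efq.
Defined.

End Lindenbaum.

Lemma lindenbaum_lemma (G : set form) c :
  ~ derives G c -> exists T : ptheory, G `<=` T /\ ~ T c.
Proof.
move=> G_c; exists (lindenbaum G_c); split; first exact: (@stage_sub G c 0).
by move=> Tc; apply: (lindenbaum_consistent G_c); apply: derives_hyp.
Qed.

Lemma ptheory_refute_imp (T : ptheory) a c :
  ~ T (Imp a c) -> exists T' : ptheory, [/\ T `<=` T', T' a & ~ T' c].
Proof.
move=> NTac; have /lindenbaum_lemma [T' [sT' NT'c]] : ~ derives (T `|` [set a]) c.
  by move=> /deduction /derives_ptheory.
by exists T'; split=> // [x Tx|]; apply: sT'; [left|right].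
Qed.

Lemma prf_of_ptheories a : (forall T : ptheory, T a) -> prf a.
Proof.
move=> Ta; apply: contrapT => Na.
have /lindenbaum_lemma [T [_ NTa]] : ~ derives set0 a.
  by move=> D; apply: Na; elim: D => // x y _ ? _; apply: r_mp.
exact: NTa.
Qed.

Lemma ptheory_impP (T : ptheory) a b :
  T (Imp a b) <-> forall T' : ptheory, T `<=` T' -> T' a -> T' b.
Proof.
split=> [Tab T' sTT' T'a|Tab]; first exact: ptheory_mp T'a (sTT' _ Tab).
by apply: contrapT => /ptheory_refute_imp [T' [sTT' T'a NT'b]]; apply/NT'b/Tab.
Qed.

Lemma prf_imp_of_ptheories a b : (forall T : ptheory, T a -> T b) -> prf (Imp a b).
Proof.
by move=> Tab; apply: prf_of_ptheories => T; apply/ptheory_impP => T' _; apply: Tab.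
Qed.

Lemma ptheory_andP (T : ptheory) a b : T (And a b) <-> T a /\ T b.
Proof.
split=> [Tab|[Ta Tb]].
  by split; apply: ptheory_mp Tab _; apply: ptheory_prf;
    [apply: ax_andE1|apply: ax_andE2].
by apply: ptheory_mp Tb _; apply: ptheory_mp Ta _; apply/ptheory_prf/ax_andI.
Qed.

Lemma ptheory_orP (T : ptheory) a b : T (Or a b) <-> T a \/ T b.
Proof.
split=> [|[Ta|Tb]]; first exact: ptheory_prime.
  by apply: ptheory_mp Ta _; apply/ptheory_prf/ax_orI1.
by apply: ptheory_mp Tb _; apply/ptheory_prf/ax_orI2.
Qed.

(** * The successor theory and eventualities *)

Definition ptheory_next (T : ptheory) : ptheory.
Proof.
refine (@PTheory (fun a => T (Next a)) _ _ _ _).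
- by move=> a pa; apply/ptheory_prf/r_nec.
- move=> a b Ta Tab; apply: ptheory_mp Ta _; apply: ptheory_mp Tab _.
  exact/ptheory_prf/ax_nextImp.
- move=> a b Tab; apply: ptheory_prime; apply: ptheory_mp Tab _.
  exact/ptheory_prf/ax_nextOr.
- move=> TBot; apply: (@ptheory_consistent T); apply: ptheory_mp TBot _.
  exact/ptheory_prf/ax_nextBot.
Defined.

Lemma ptheory_next_sub (T T' : ptheory) :
  T `<=` T' -> ptheory_next T `<=` ptheory_next T'.
Proof. by move=> sTT' a; apply: sTT'. Qed.

Lemma ptheory_ev_ind a c :
  (forall T : ptheory, T a -> T c) -> (forall T : ptheory, T (Next c) -> T c) ->
  forall T : ptheory, T (Ev a) -> T c.
Proof.
move=> ac nextc T Tea.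
apply: ptheory_mp (ptheory_prf T (r_ind (prf_imp_of_ptheories nextc))).
exact: ptheory_mp Tea (ptheory_prf T (r_evMono (prf_imp_of_ptheories ac))).
Qed.

Lemma ptheory_evP (T : ptheory) a : T (Ev a) <-> T a \/ T (Next (Ev a)).
Proof.
split=> [Tea|/ptheory_orP Tunf]; last first.
  exact: ptheory_mp Tunf (ptheory_prf T (ax_evFix a)).
apply/ptheory_orP; move: T Tea; apply: ptheory_ev_ind => T Ta; apply/ptheory_orP.
  by left.
have Tnext : ptheory_next T (Ev a) :=
  @ptheory_mp (ptheory_next T) _ _ Ta (ptheory_prf _ (ax_evFix a)).
by right.
Qed.

Definition bigAnd (l : seq form) : form := foldr And (Neg Bot) l.
Definition bigOr (l : seq form) : form := foldr Or Bot l.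

Lemma ptheory_bigAndP (T : ptheory) l : T (bigAnd l) <-> {in l, forall x, T x}.
Proof.
elim: l => [|y l IH] /=; first by split=> // _; apply/ptheory_prf/prf_imp_refl.
rewrite ptheory_andP IH; split=> [[Ty Tl] x|Tyl].
  by rewrite inE => /predU1P [->|/Tl].
by split=> [|x xl]; apply: Tyl; rewrite inE ?eqxx ?xl ?orbT.
Qed.

Lemma ptheory_bigOrP (T : ptheory) l : T (bigOr l) <-> exists2 x, x \in l & T x.
Proof.
elim: l => [|y l IH] /=; first by split=> [/ptheory_consistent|[]].
rewrite ptheory_orP IH; split=> [[Ty|[x xl Tx]]|[x]].
- by exists y; rewrite ?inE ?eqxx.
- by exists x; rewrite // inE xl orbT.
- by rewrite inE => /predU1P [->|xl Tx]; [left|right; exists x].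
Qed.

(** * Moments, bounded simulation and eventualities *)

Fixpoint sublists (T : Type) (s : seq T) : seq (seq T) :=
  if s is x :: s' then [seq x :: l | l <- sublists s'] ++ sublists s' else [:: [::]].

Lemma filter_sublists (T : eqType) (p : pred T) s : [seq x <- s | p x] \in sublists s.
Proof.
elim: s => [|x s IH] /=; first by rewrite inE.
by case: (p x); rewrite mem_cat ?IH ?orbT // map_f.
Qed.

Lemma count_ltn_subpred (T : eqType) (p q : pred T) s x :
  subpred p q -> x \in s -> q x -> ~~ p x -> (count p s < count q s)%N.
Proof.
move=> pq; elim: s => // y s IH; rewrite inE => /predU1P [<-|xs] qx npx /=.
  by rewrite (negbTE npx) qx add0n add1n ltnS sub_count.
have pqy : (p y <= q y)%N by case: (p y) (pq y) => // /(_ isT) ->.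
by have := IH xs qx npx; lia.
Qed.

Section Fragment.
Variable S : seq form.

(* A moment [(p, n, L)] prescribes the members [p] and non-members [n] of S
   and the characteristic formulas [L] of lower depth to be refuted. *)
Definition moment := (seq form * seq form * seq form)%type.

Definition moment_form (m : moment) : form :=
  Imp (bigAnd m.1.1) (bigOr (m.1.2 ++ m.2)).

Definition realizes (T : ptheory) (m : moment) :=
  {in m.1.1, forall x, T x} /\ {in m.1.2 ++ m.2, forall x, ~ T x}.

Fixpoint moments (n : nat) : seq moment :=
  if n is n'.+1 then
    moments n' ++ [seq (pn, L) | pn <- [seq (p, q) | p <- sublists S, q <- sublists S],
                                 L <- sublists (map moment_form (moments n'))]
  else [::].

Lemma moments_mono m n : (m <= n)%N -> {subset moments m <= moments n}.
Proof.
move=> /subnK <-; elim: (n - m)%N => [//|k IH] x /IH.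
by rewrite addSn /= mem_cat => ->.
Qed.

Lemma mem_moments n p q L : p \in sublists S -> q \in sublists S ->
  L \in sublists (map moment_form (moments n)) -> (p, q, L) \in moments n.+1.
Proof.
move=> pS qS Ln /=; rewrite mem_cat; apply/orP; right.
apply: (allpairs_f (fun pn L => (pn, L))) => //.
exact: (allpairs_f (fun p q => (p, q))).
Qed.

Definition pos_part (T : ptheory) := [seq s <- S | `[< T s >]].
Definition neg_part (T : ptheory) := [seq s <- S | `[< ~ T s >]].
Definition depth (T : ptheory) := (size S - size (pos_part T))%N.

Definition moment_of (T : ptheory) : moment :=
  (pos_part T, neg_part T,
   [seq d <- map moment_form (moments (depth T)) | `[< ~ T d >]]).

Definition agree (a b : ptheory) := {in S, forall s, a s <-> b s}.

(* [a] matches every moment refuted by [b] at the depth of [b]; the depth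
   drops strictly whenever [b] grows on S, so this is enough for the zig
   condition [simulates_zig]. *)
Definition simulates (a b : ptheory) :=
  agree a b /\ {in map moment_form (moments (depth b)), forall d, a d -> b d}.

Lemma moment_of_depth T : moment_of T \in moments (depth T).+1.
Proof. by apply: mem_moments; apply: filter_sublists. Qed.

Lemma moment_of_mem T : moment_of T \in moments (size S).+1.
Proof. by apply: moments_mono (moment_of_depth T); rewrite ltnS leq_subr. Qed.

Lemma realizes_moment_of T : realizes T (moment_of T).
Proof.
split=> x; first by rewrite mem_filter => /andP [/asboolP].
by rewrite mem_cat !mem_filter => /orP [] /andP [/asboolP].
Qed.

Lemma depth_agree a b : agree a b -> depth a = depth b.
Proof.
move=> ab; rewrite /depth /pos_part; congr (_ - size _)%N.
by apply: eq_in_filter => x /ab /asbool_equiv_eq.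
Qed.

Lemma simulates_of_realizes T' T : realizes T' (moment_of T) -> simulates T' T.
Proof.
move=> [T'pos T'neg]; have agreeT'T : agree T' T.
  move=> s sS; split=> [T's|Ts]; last first.
    by apply: T'pos; rewrite mem_filter sS andbT; apply/asboolP.
  apply: contrapT => NTs; apply: T'neg T's.
  by rewrite mem_cat mem_filter sS andbT; apply/orP; left; apply/asboolP.
split=> // d dT T'd; apply: contrapT => NTd; apply: T'neg T'd.
by rewrite mem_cat; apply/orP; right; rewrite mem_filter dT andbT; apply/asboolP.
Qed.

Lemma moment_formP (T : ptheory) m :
  ~ T (moment_form m) <-> exists2 T' : ptheory, T `<=` T' & realizes T' m.
Proof.
split=> [/ptheory_refute_imp [T' [sTT' T'pos T'neg]]|[T' sTT' [T'pos T'neg]] /sTT' T'm].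
  exists T' => //; split; first exact/ptheory_bigAndP.
  by move=> x xm T'x; apply: T'neg; apply/ptheory_bigOrP; exists x.
have /ptheory_bigOrP [x xm T'x] := ptheory_mp (proj2 (ptheory_bigAndP T' _) T'pos) T'm.
exact: T'neg xm T'x.
Qed.

Lemma realizes_moment_form (T : ptheory) m : realizes T m -> ~ T (moment_form m).
Proof. by move=> Tm; apply/moment_formP; exists T. Qed.

Lemma simulates_refl T : simulates T T.
Proof. by split. Qed.

Lemma simulates_trans a b c : simulates a b -> simulates b c -> simulates a c.
Proof.
move=> [ab a_b] [bc b_c]; split=> [s sS|d dc ad].
  by rewrite (ab s sS) (bc s sS).
by apply: b_c (dc) _; apply: a_b ad; rewrite (depth_agree bc).
Qed.

Lemma depth_lt (b b' : ptheory) : b `<=` b' -> ~ agree b b' -> (depth b' < depth b)%N.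
Proof.
move=> sbb' Nbb'; have [s sS [b's Nbs]] : exists2 s, s \in S & b' s /\ ~ b s.
  apply: contrapT => Nex; apply: Nbb' => s sS; split=> [/sbb' //|b's].
  by apply: contrapT => Nbs; apply: Nex; exists s.
have wlt : (size (pos_part b) < size (pos_part b'))%N.
  rewrite !size_filter; apply: count_ltn_subpred sS _ _.
  - by move=> x /asboolP /sbb' /asboolP.
  - exact/asboolP.
  - exact/asboolPn.
have b'S : (size (pos_part b') <= size S)%N by rewrite size_filter count_size.
by rewrite /depth; lia.
Qed.

Lemma simulates_zig (a b b' : ptheory) :
  simulates a b -> b `<=` b' -> exists2 a' : ptheory, a `<=` a' & simulates a' b'.
Proof.
move=> [ab a_b] sbb'; have [bb'|Nbb'] := pselect (agree b b').
  exists a => //; split=> [s sS|d]; first by rewrite (ab s sS) (bb' s sS).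
  by rewrite -(depth_agree bb') => db' /(a_b _ db') /sbb'.
have Na : ~ a (moment_form (moment_of b')).
  have mb : moment_form (moment_of b') \in map moment_form (moments (depth b)).
    by apply/map_f/(moments_mono _ (moment_of_depth b')); apply: depth_lt.
  by move=> /(a_b _ mb) /sbb'; apply/realizes_moment_form/realizes_moment_of.
have /moment_formP [a' saa' a'm] := Na.
by exists a' => //; apply: simulates_of_realizes.
Qed.

Definition step (a w : ptheory) :=
  exists2 z, simulates z a & simulates w (ptheory_next z).

Lemma step_next T : step T (ptheory_next T).
Proof. by exists T; apply: simulates_refl. Qed.

Lemma step_nextP a w b : step a w -> b \in S -> Next b \in S -> w b <-> a (Next b).
Proof. by move=> [z [za _] [wz _]] bS nbS; rewrite (wz b bS) -(za _ nbS). Qed.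

Lemma step_evP a w b :
  step a w -> Ev b \in S -> b \in S -> a (Ev b) <-> a b \/ w (Ev b).
Proof.
move=> [z [za _] [wz _]] ebS bS.
by rewrite -(za _ ebS) -(za _ bS) (wz _ ebS) ptheory_evP.
Qed.

Inductive reach (al : form) : ptheory -> Prop :=
  | reach_here (T : ptheory) : T al -> reach al T
  | reach_step (T w : ptheory) : step T w -> reach al w -> reach al T.

Lemma reach_simulates al (T' T : ptheory) :
  al \in S -> simulates T' T -> reach al T' -> reach al T.
Proof.
move=> alS T'T rT'; case: rT' T'T => [U Ual|U w [z zU wz] rw] UT.
  by apply: reach_here; apply/(UT.1 al alS).
by apply: (@reach_step _ T w) => //; exists z => //; apply: simulates_trans zU UT.
Qed.

(* [reach_form al] holds in [T] iff every extension of [T] reaches [al]; it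
   follows from [al] and from [Next (reach_form al)], so the induction rule
   derives it from [Ev al].  Finitely many moments suffice because reaching
   is invariant under simulation. *)
Definition reach_form (al : form) : form :=
  bigAnd [seq moment_form m | m <- moments (size S).+1 &
          `[< forall T' : ptheory, realizes T' m -> ~ reach al T' >]].

Lemma reach_formI al (T : ptheory) :
  (forall T' : ptheory, T `<=` T' -> reach al T') -> T (reach_form al).
Proof.
move=> Treach; apply/ptheory_bigAndP => _ /mapP [m + ->].
rewrite mem_filter => /andP [/asboolP Nreach _].
by apply: contrapT => /moment_formP [T' sTT' T'm]; apply: Nreach T'm (Treach T' sTT').
Qed.

Lemma reach_of_reach_form al (T : ptheory) :
  al \in S -> T (reach_form al) -> reach al T.
Proof.
move=> alS Tform; apply: contrapT => NT.
apply: realizes_moment_form (realizes_moment_of T) _.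
apply: (proj1 (ptheory_bigAndP _ _) Tform); apply: map_f.
rewrite mem_filter moment_of_mem andbT; apply/asboolP => T' T'm.
by move=> /(reach_simulates alS (simulates_of_realizes T'm)).
Qed.

Lemma reach_of_ev al (T : ptheory) : al \in S -> T (Ev al) -> reach al T.
Proof.
move=> alS Tev; apply: (reach_of_reach_form alS); move: T Tev.
apply: ptheory_ev_ind => T Tal; apply: reach_formI => T' sTT'.
  exact/reach_here/sTT'.
apply: reach_step (step_next T') _; apply: (reach_of_reach_form alS); exact: sTT' _ Tal.
Qed.

Fixpoint chain (x : ptheory) (l : seq ptheory) : Prop :=
  if l is y :: l' then step x y /\ chain y l' else True.

Lemma chain_cat x l1 l2 : chain x l1 -> chain (last x l1) l2 -> chain x (l1 ++ l2).
Proof. by elim: l1 x => [//|y l IH] x /= [xy yl] l2c; split=> //; apply: IH. Qed.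

Lemma chain_rcons x l y : chain x l -> step (last x l) y -> chain x (rcons l y).
Proof. by rewrite -cats1 => xl ly; apply: chain_cat. Qed.

Lemma reach_chain al (T : ptheory) : reach al T -> exists2 l, chain T l & last T l al.
Proof. by elim=> [U Ual|U w Uw _ [l wl lal]]; [exists [::]|exists (w :: l)]. Qed.

Definition visits (P : ptheory -> Prop) (x : ptheory) (l : seq ptheory) :=
  exists2 k, (k <= size l)%N & P (nth x (x :: l) k).

Lemma visits_cat P x l1 l2 :
  visits P x l1 \/ visits P (last x l1) l2 -> visits P x (l1 ++ l2).
Proof.
case=> [[k kl Pk]|[[|k] kl Pk]].
- exists k; first by rewrite size_cat; lia.
  by rewrite -cat_cons nth_cat /= ltnS kl.
- exists (size l1); first by rewrite size_cat leq_addr.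
  by rewrite -cat_cons nth_cat /= ltnSn -[size l1]/(size (x :: l1)).-1 nth_last.
- exists (size l1 + k.+1)%N; first by rewrite size_cat /= in kl *; lia.
  rewrite -cat_cons nth_cat /=.
  have -> : (size l1 + k.+1 < (size l1).+1)%N = false by lia.
  have -> : (size l1 + k.+1 - (size l1).+1 = k)%N by lia.
  by rewrite (set_nth_default (last x l1)).
Qed.

Hypothesis S_ev_closed : forall a, Ev a \in S -> a \in S.

Lemma chain_ev_persist x l a : Ev a \in S -> chain x l -> x (Ev a) ->
  visits (fun u => u a) x l \/ last x l (Ev a).
Proof.
move=> eaS; elim: l x => [|y l IH] x /=; first by right.
move=> [xy yl] /(step_evP xy eaS (S_ev_closed eaS)) [xa|/(IH _ yl) [[k kl yk]|]].
- by left; exists 0%N.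
- by left; exists k.+1; rewrite //= (set_nth_default y).
- by right.
Qed.

Lemma fulfilling_chain (E : seq form) : {subset E <= S} -> forall w : ptheory,
  exists l, [/\ (0 < size l)%N, chain w l &
    forall a, Ev a \in E -> w (Ev a) -> visits (fun u => u a) w l].
Proof.
elim: E => [_|e E IH eES] w.
  by exists [:: ptheory_next w]; split=> //=; split=> //; apply: step_next.
have ES : {subset E <= S} by move=> x xE; apply: (eES x); rewrite inE xE orbT.
have {}IH := IH ES.
have [[al [eal wal]]|Nev] := pselect (exists al, e = Ev al /\ w (Ev al)); last first.
  have [l [l0 wl lE]] := IH w; exists l; split=> // a; rewrite inE => /predU1P [ea|] wa.
    by case: Nev; exists a.
  exact: lE.
subst e; have alS := S_ev_closed (eES _ (mem_head _ _)).
have [l1 wl1 l1al] := reach_chain (reach_of_ev alS wal).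
have [l2 [l20 l1l2 l2E]] := IH (last w l1).
exists (l1 ++ l2); split; [by rewrite size_cat; lia|exact: chain_cat|].
move=> a; rewrite inE => /predU1P [[->] _|aE wa]; apply: visits_cat.
  by right; exists 0%N.
have [l1a|l1ea] := chain_ev_persist (ES _ aE) wl1 wa.
  by left.
by right; apply: l2E.
Qed.

Definition block (w : ptheory) : seq ptheory :=
  projT1 (cid (fulfilling_chain (fun x (xS : x \in S) => xS) w)).

Lemma blockP w : [/\ (0 < size (block w))%N, chain w (block w) &
  forall a, Ev a \in S -> w (Ev a) -> visits (fun u => u a) w (block w)].
Proof. by rewrite /block; case: cid. Qed.

Definition step_path (p : nat -> ptheory) := forall i, step (p i) (p i.+1).

Definition honest (p : nat -> ptheory) :=
  forall i a, Ev a \in S -> p i (Ev a) -> exists2 j, (i <= j)%N & p j a.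

Section Walk.
Variables (T0 : ptheory) (q0 : seq ptheory).
Hypothesis T0q0 : chain T0 q0.

(* State: the current theory and the queue of theories still to be visited. *)
Fixpoint walk_state (n : nat) : ptheory * seq ptheory :=
  if n is n'.+1 then
    let: (w, q) := walk_state n' in
    if q is z :: q' then (z, q') else (head w (block w), behead (block w))
  else (T0, q0).

Definition walk (n : nat) : ptheory := (walk_state n).1.

Local Notation queue n := (walk_state n).2.

Lemma walk_chain n : chain (walk n) (queue n).
Proof.
elim: n => // n; rewrite /walk /=; case: (walk_state n) => w [|z q] /= => [_|[] //].
have [b0 wb _] := blockP w.
by case: (block w) b0 wb => // y b _ [].
Qed.

Lemma walk_step n : step (walk n) (walk n.+1).
Proof.
have := walk_chain n; rewrite /walk /=.
case: (walk_state n) => w [|z q] /=; last by case.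
have [b0 wb _] := blockP w.
by case: (block w) b0 wb => // y b _ [].
Qed.

Lemma walk_drop n k : (k <= size (queue n))%N ->
  walk_state (n + k) = (nth (walk n) (walk n :: queue n) k, drop k (queue n)).
Proof.
elim: k => [_|k IH kq]; first by rewrite addn0 drop0 /walk; case: walk_state.
by rewrite addnS /= IH ?(ltnW kq) //= (drop_nth (walk n)).
Qed.

Lemma walk_prefix i : (i <= size q0)%N -> walk i = nth T0 (T0 :: q0) i.
Proof. by move=> iq; rewrite /walk -[i]add0n walk_drop. Qed.

Lemma walk_block m : queue m = [::] -> forall k, (k < size (block (walk m)))%N ->
  walk (m + k.+1) = nth (walk m) (block (walk m)) k.
Proof.
move=> qm k kb.
have Wm1 : walk_state m.+1 = (head (walk m) (block (walk m)), behead (block (walk m))).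
  by rewrite /= /walk; case: (walk_state m) qm => w q /= ->.
rewrite addnS -addSn {1}/walk walk_drop Wm1 /=; last by rewrite size_behead; lia.
rewrite {1 2}/walk Wm1 /=.
by case: (block _) kb => // y b kb; apply: set_nth_default.
Qed.

Lemma walk_honest : honest walk.
Proof.
move=> i a eaS wea.
have [[k kq wk]|qea] := chain_ev_persist eaS (walk_chain i) wea.
  by exists (i + k)%N; [apply: leq_addr|rewrite /walk walk_drop].
set m := (i + size (queue i))%N.
have Wm : walk_state m = (last (walk i) (queue i), [::]).
  by rewrite walk_drop // drop_size -[size _]/(size (walk i :: queue i)).-1 nth_last.
have wmea : walk m (Ev a) by rewrite /walk Wm.
have [_ _ /(_ a eaS wmea) [[|k] kb bk]] := blockP (walk m).
  by exists m; [apply: leq_addr|].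
by exists (m + k.+1)%N; [rewrite /m; lia|rewrite walk_block ?Wm].
Qed.

End Walk.

End Fragment.

(** * The dynamical system of good paths *)

Definition gpath (S : seq form) := {p : nat -> ptheory | step_path S p /\ honest S p}.

HB.instance Definition _ S := gen_eqMixin (gpath S).
HB.instance Definition _ S := gen_choiceMixin (gpath S).

Definition prefix_open S (U : set (gpath S)) :=
  forall x, U x -> exists N, forall y : gpath S,
    (forall i, (i < N)%N -> sval x i `<=` sval y i) -> U y.

Lemma prefix_openT S : prefix_open (@setT (gpath S)).
Proof. by move=> x _; exists 0%N. Qed.

Lemma prefix_openI S : setI_closed (@prefix_open S).
Proof.
move=> A B oA oB x [Ax Bx]; have [N1 AN1] := oA x Ax; have [N2 BN2] := oB x Bx.
exists (maxn N1 N2) => y xy; split; [apply: AN1|apply: BN2] => i iN; apply: xy; lia.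
Qed.

Lemma prefix_open_bigcup S (I : Type) (F : I -> set (gpath S)) :
  (forall i, prefix_open (F i)) -> prefix_open (\bigcup_i F i).
Proof.
move=> oF x [i _ Fix]; have [N FN] := oF i x Fix.
by exists N => y xy; exists i => //; apply: FN.
Qed.

HB.instance Definition _ S :=
  isOpenTopological.Build (gpath S)
    (@prefix_openT S) (@prefix_openI S) (@prefix_open_bigcup S).

Lemma prefix_openP S (U : set (gpath S)) : open U <-> prefix_open U.
Proof. by []. Qed.

Fixpoint subformulas (a : form) : seq form :=
  a :: match a with
       | And b c | Or b c | Imp b c => subformulas b ++ subformulas c
       | Next b | Ev b => subformulas b
       | _ => [::]
       end.

Lemma subformulas_refl a : a \in subformulas a.
Proof. by case: a => *; rewrite inE eqxx. Qed.

Lemma subformulas_trans a b :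
  b \in subformulas a -> {subset subformulas b <= subformulas a}.
Proof.
elim: a => [n||b1 IH1 b2 IH2|b1 IH1 b2 IH2|b1 IH1 b2 IH2|b1 IH|b1 IH];
  rewrite [subformulas _]/= in_cons => /predU1P [-> //|]; rewrite ?mem_cat //.
- by move=> /orP [/IH1|/IH2] sub c /sub cb; rewrite /= inE mem_cat cb ?orbT.
- by move=> /orP [/IH1|/IH2] sub c /sub cb; rewrite /= inE mem_cat cb ?orbT.
- by move=> /orP [/IH1|/IH2] sub c /sub cb; rewrite /= inE mem_cat cb ?orbT.
- by move=> /IH sub c /sub cb; rewrite /= inE cb orbT.
- by move=> /IH sub c /sub cb; rewrite /= inE cb orbT.
Qed.

Definition subformula_closed (S : seq form) :=
  forall a, a \in S -> {subset subformulas a <= S}.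

Lemma subformulas_closed (a : form) : subformula_closed (subformulas a).
Proof. exact: subformulas_trans. Qed.

Section GoodPaths.
Variable S : seq form.
Local Notation X := (gpath S).

Lemma gpath_shift_proof (x : X) :
  step_path S (fun i => sval x i.+1) /\ honest S (fun i => sval x i.+1).
Proof.
have [xstep xhonest] := svalP x; split=> [i|i a eaS xea]; first exact: xstep.
by have [[|j] ij xja] := xhonest i.+1 a eaS xea; last exists j.
Qed.

Definition shift (x : X) : X := exist _ _ (gpath_shift_proof x).

Lemma iter_shift n (x : X) i : sval (iter n shift x) i = sval x (n + i).
Proof. by elim: n x i => [//|n IH] x i /=; rewrite IH addSnnS. Qed.

Lemma shift_continuous : continuous shift.
Proof.
apply/continuousP => A /prefix_openP oA; apply/prefix_openP => x Ax.
have [N AN] := oA (shift x) Ax.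
by exists N.+1 => y xy; apply: AN => i iN; apply: xy.
Qed.

Definition at0 (a : form) : set X := [set x : X | sval x 0 a].

Lemma open_at0 a : open (at0 a).
Proof. by apply/prefix_openP => x xa; exists 1%N => y /(_ 0%N isT); apply. Qed.

Definition gvar (n : nat) : set X := at0 (Var n).

Lemma open_gvar n : open (gvar n).
Proof. exact: open_at0. Qed.

Lemma at0_Bot : at0 Bot = set0.
Proof. by rewrite predeqE => x; split=> // /ptheory_consistent. Qed.

Lemma at0_And b c : at0 (And b c) = at0 b `&` at0 c.
Proof. by rewrite predeqE => x; apply: ptheory_andP. Qed.

Lemma at0_Or b c : at0 (Or b c) = at0 b `|` at0 c.
Proof. by rewrite predeqE => x; apply: ptheory_orP. Qed.

Lemma at0_Next b : b \in S -> Next b \in S -> at0 (Next b) = shift @^-1` at0 b.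
Proof.
move=> bS nbS; rewrite predeqE => x.
exact: iff_sym (step_nextP (proj1 (svalP x) 0) bS nbS).
Qed.

Lemma gpath_ev_back (x : X) n b :
  Ev b \in S -> b \in S -> sval x n (Ev b) -> sval x 0 (Ev b).
Proof.
move=> ebS bS; elim: n => // n IH xn; apply: IH.
by apply/(step_evP (proj1 (svalP x) n) ebS bS); right.
Qed.

Lemma at0_Ev b : Ev b \in S -> b \in S ->
  at0 (Ev b) = \bigcup_n (iter n shift @^-1` at0 b).
Proof.
move=> ebS bS; rewrite predeqE => x.
split=> [/(proj2 (svalP x) 0 b ebS) [j _ xjb]|[n _]].
  by exists j => //; rewrite /at0 /= iter_shift addn0.
rewrite /at0 /= iter_shift addn0 => xnb.
by apply: (gpath_ev_back (n := n)) => //; apply/ptheory_evP; left.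
Qed.

Lemma extend_prefix (p : nat -> ptheory) (T1 : ptheory) N :
  step_path S p -> p 0 `<=` T1 -> exists l,
    [/\ size l = N, chain S T1 l & forall i, (i <= N)%N -> p i `<=` nth T1 (T1 :: l) i].
Proof.
move=> pstep pT1; elim: N => [|N [l [lN T1l pl]]].
  by exists [::]; split=> // -[].
have lastN : last T1 l = nth T1 (T1 :: l) N.
  by rewrite -lN -[size l]/(size (T1 :: l)).-1 nth_last.
have [z zpN pN1z] := pstep N.
have [z' zz' z'l] := simulates_zig zpN (pl N (leqnn N)).
have [y' pN1y' y'z'] := simulates_zig pN1z (ptheory_next_sub zz').
exists (rcons l y'); split; first by rewrite size_rcons lN.
  by apply: chain_rcons T1l _; exists z'; rewrite // lastN.
move=> i; rewrite -rcons_cons nth_rcons /= lN ltnS.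
rewrite leq_eqVlt => /predU1P [->|iN]; first by rewrite ltnn eqxx.
by rewrite -ltnS iN; apply: pl.
Qed.

Hypothesis S_closed : subformula_closed S.

Lemma S_ev_closed a : Ev a \in S -> a \in S.
Proof.
by move=> /S_closed eaS; apply: eaS; rewrite /= inE subformulas_refl orbT.
Qed.

Definition gpath_of_chain T0 q0 (T0q0 : chain S T0 q0) : X :=
  exist _ (walk S_ev_closed T0 q0)
    (conj (walk_step S_ev_closed T0q0) (walk_honest T0q0)).

Lemma extend (x : X) (T1 : ptheory) N : sval x 0 `<=` T1 -> exists y : X,
  sval y 0 = T1 /\ forall i, (i < N)%N -> sval x i `<=` sval y i.
Proof.
move=> xT1; have [l [lN T1l xl]] := extend_prefix N (proj1 (svalP x)) xT1.
exists (gpath_of_chain T1l); split=> // i iN; rewrite /= walk_prefix ?lN ?(ltnW iN) //.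
exact/xl/ltnW.
Qed.

Lemma at0_Imp b c : at0 (Imp b c) = interior (~` at0 b `|` at0 c).
Proof.
apply/seteqP; split.
  rewrite -open_subsetE; last exact: open_at0.
  move=> x xbc.
  have [xb|nxb] := pselect (sval x 0 b); [right|by left].
  exact: ptheory_mp xb xbc.
move=> x xint; apply: contrapT => /ptheory_refute_imp [T1 [x0T1 T1b NT1c]].
have [N xN] := proj1 (prefix_openP _) (@open_interior _ (~` at0 b `|` at0 c)) x xint.
have [y [y0 xy]] := extend N x0T1.
by case: (interior_subset (xN y xy)); rewrite /at0 /= y0.
Qed.

Lemma eval_at0 a : a \in S -> Defs.eval shift gvar a = at0 a.
Proof.
elim: a => [n||b IHb c IHc|b IHb c IHc|b IHb c IHc|b IH|b IH] aS /=.
- by [].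
- by rewrite at0_Bot.
- rewrite IHb ?IHc ?at0_And //; apply: (S_closed aS);
  by rewrite /= inE mem_cat subformulas_refl ?orbT.
- rewrite IHb ?IHc ?at0_Or //; apply: (S_closed aS);
  by rewrite /= inE mem_cat subformulas_refl ?orbT.
- rewrite IHb ?IHc ?at0_Imp //; apply: (S_closed aS);
  by rewrite /= inE mem_cat subformulas_refl ?orbT.
- have bS : b \in S by apply: (S_closed aS); rewrite /= inE subformulas_refl orbT.
  by rewrite IH // (at0_Next bS aS).
- by rewrite IH ?(S_ev_closed aS) // (at0_Ev aS (S_ev_closed aS)).
Qed.

End GoodPaths.

Theorem theorem8p4 (phi : form) : valid phi -> prf phi.
Proof.
move=> phi_valid; apply: prf_of_ptheories => T; apply: contrapT => NT.
have S_closed := @subformulas_closed phi.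
have := phi_valid _ _ (@shift_continuous (subformulas phi)) _ (@open_gvar _).
rewrite (eval_at0 S_closed (subformulas_refl phi)) => at0_phi.
have : at0 phi (gpath_of_chain S_closed (T0 := T) (q0 := [::]) I) by rewrite at0_phi.
exact: NT.
Qed.
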